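(* Let $r\ge4$ and let $N$ be a matroid. A tensor product of $M(r)$ and $N$ exists if and only if the simplification of $N$ is a free matroid (a matroid in which every subset is independent).
   Context: Quasi product of matroids $M,N$: a matroid $P$ on $E(M)\times E(N)$ such that for every non-loop $e\in E(M)$, $x\mapsto(e,x)$ is an isomorphism $N\cong P|_{\{e\}\times E(N)}$; for every non-loop $f\in E(N)$, $x\mapsto(x,f)$ is an isomorphism $M\cong P|_{E(M)\times\{f\}}$; and the rows $\{e\}\times E(N)$ with $e$ a loop of $M$ and columns $E(M)\times\{f\}$ with $f$ a loop of $N$ have rank $0$. A tensor product is a quasi product of rank $\mathrm{rk}(M)\mathrm{rk}(N)$. Lindström matroid $M(r)$: with $A,B,C,D$ pairwise disjoint of size $r-2$, $E_r=A\cup B\cup C\cup D$, $\mathcal{H}=\{A\cup B,A\cup C,A\cup D,B\cup C,B\cup D\}$, $M(r)$ is the rank-$r$ matroid on $E_r$ with $\mathrm{rk}(X)=\min(|X|,r-1)$ if $X\subseteq H$ for some $H\in\mathcal{H}$, and $\min(|X|,r)$ otherwise. *)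

From mathcomp Require Import all_boot.
Set Implicit Arguments. Unset Strict Implicit. Unset Printing Implicit Defensive.

Definition is_matroid (E : finType) (rk : {set E} -> nat) : Prop :=
  [/\ forall X : {set E}, rk X <= #|X|,
      forall X Y : {set E}, X \subset Y -> rk X <= rk Y
    & forall X Y : {set E}, rk (X :|: Y) + rk (X :&: Y) <= rk X + rk Y].

Definition is_loop (E : finType) (rk : {set E} -> nat) (e : E) : bool :=
  rk [set e] == 0.

Definition parallel (E : finType) (rk : {set E} -> nat) (e f : E) : bool :=
  [&& e != f, ~~ is_loop rk e, ~~ is_loop rk f & rk [set e; f] == 1].

Definition simplification_set (E : finType) (rk : {set E} -> nat) (T : {set E}) : Prop :=
  [/\ forall e, e \in T -> ~~ is_loop rk e,
      forall e f, e \in T -> f \in T -> ~~ parallel rk e f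
    & forall e, ~~ is_loop rk e -> e \notin T -> exists2 f, f \in T & parallel rk e f].

Definition simplification_free (E : finType) (rk : {set E} -> nat) : Prop :=
  exists T : {set E}, simplification_set rk T /\
    forall X : {set E}, X \subset T -> rk X = #|X|.

Definition quasi_product (EM EN : finType) (rkM : {set EM} -> nat)
  (rkN : {set EN} -> nat) (rkP : {set (EM * EN)} -> nat) : Prop :=
  [/\ is_matroid rkP,
      forall e : EM, ~~ is_loop rkM e ->
        forall X : {set EN}, rkP [set (e, x) | x in X] = rkN X,
      forall f : EN, ~~ is_loop rkN f ->
        forall X : {set EM}, rkP [set (x, f) | x in X] = rkM X,
      forall e : EM, is_loop rkM e -> rkP [set (e, x) | x : EN] = 0
    & forall f : EN, is_loop rkN f -> rkP [set (x, f) | x : EM] = 0].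

Definition tensor_product (EM EN : finType) (rkM : {set EM} -> nat)
  (rkN : {set EN} -> nat) (rkP : {set (EM * EN)} -> nat) : Prop :=
  quasi_product rkM rkN rkP /\ rkP setT = rkM setT * rkN setT.

Definition has_tensor_product (EM EN : finType) (rkM : {set EM} -> nat)
  (rkN : {set EN} -> nat) : Prop :=
  exists rkP : {set (EM * EN)} -> nat, tensor_product rkM rkN rkP.

(* Lindström matroid M(r): ground set A ∪ B ∪ C ∪ D encoded as 'I_4 * 'I_(r-2),
   where part 0 = A, 1 = B, 2 = C, 3 = D. *)
Definition lindstrom_E (r : nat) : finType := ('I_4 * 'I_(r - 2))%type.

(* H = {A∪B, A∪C, A∪D, B∪C, B∪D} as pairs of part indices. *)
Definition lindstrom_hyps : seq ('I_4 * 'I_4) :=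
  [:: (inord 0, inord 1); (inord 0, inord 2); (inord 0, inord 3);
      (inord 1, inord 2); (inord 1, inord 3)].

Definition lindstrom_part (r : nat) (p : 'I_4 * 'I_4) : {set lindstrom_E r} :=
  [set x : lindstrom_E r | (x.1 == p.1) || (x.1 == p.2)].

Definition lindstrom_rk (r : nat) (X : {set lindstrom_E r}) : nat :=
  if has (fun p => X \subset lindstrom_part r p) lindstrom_hyps
  then minn #|X| (r - 1) else minn #|X| r.

(* If the simplification of N is free, then N is, up to loops and parallel
   copies, the free matroid on the simplification T, and the direct sum of |T|
   copies of M(r), one for each parallel class of N, is a tensor product.

   Conversely, suppose P is a tensor product and the simplification of N is not
   free.  It then contains a circuit C with at least three elements x, y, w; put
   Z := C - {x, y, w}.  After contracting the columns indexed by Z, the columns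
   x, y, w of P behave like a quasi product of M(r) with the rank-2 uniform
   matroid on three elements: Y × {x} ∪ W × {y} has rank r(Y) + r(W), while in
   every row any two of the three entries span the third.  Submodularity then
   forces, for all sets a, b, c, d with r(c ∪ d) = r(E),
     r(E) + r(a) + r(b) + r(a ∪ b ∪ c) + r(a ∪ b ∪ d)
       <= r(a ∪ b) + r(a ∪ c) + r(b ∪ c) + r(a ∪ d) + r(b ∪ d),
   which M(r) violates for a, b, c, d = A, B, C, D: the left-hand side is
   5r - 4 and the right-hand side 5r - 5. *)

From mathcomp Require Import all_boot zify.
Set Implicit Arguments. Unset Strict Implicit. Unset Printing Implicit Defensive.

Lemma finset_ind (T : finType) (P : {set T} -> Prop) :
  P set0 -> (forall x X, P X -> P (x |: X)) -> forall X, P X.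
Proof.
move=> P0 PU X; rewrite -(set_enum X); elim: (enum X) => [|x s IH]; first by rewrite set_nil.
by rewrite set_cons; apply: PU.
Qed.

(* Rank of the contraction by [K], shifted by [rk K]. *)
Definition rk_contract (T : finType) (rk : {set T} -> nat) (K X : {set T}) : nat :=
  rk (X :|: K).

Section SubmodularFunctions.
Variables (T : finType) (rk : {set T} -> nat).
Hypothesis rk_mono : forall X Y : {set T}, X \subset Y -> rk X <= rk Y.
Hypothesis rk_submod : forall X Y : {set T}, rk (X :|: Y) + rk (X :&: Y) <= rk X + rk Y.
Implicit Types X Y A S U I : {set T}.

Lemma rk_submodS X Y U I : U \subset X :|: Y -> I \subset X :&: Y ->
  rk U + rk I <= rk X + rk Y.
Proof. by move=> /rk_mono hU /rk_mono hI; have := rk_submod X Y; lia. Qed.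

Lemma rk_subadd X Y : rk (X :|: Y) <= rk X + rk Y.
Proof. by have := rk_submod X Y; lia. Qed.

Lemma rk_contract_mono K X Y : X \subset Y -> rk_contract rk K X <= rk_contract rk K Y.
Proof. by move=> sXY; apply/rk_mono/setSU. Qed.

Lemma rk_contract_submod K X Y :
  rk_contract rk K (X :|: Y) + rk_contract rk K (X :&: Y) <=
  rk_contract rk K X + rk_contract rk K Y.
Proof.
by apply: rk_submodS; apply/subsetP => v; rewrite !inE;
  case: (v \in X); case: (v \in Y); case: (v \in K).
Qed.

Lemma rk_span_setU1 A S x : A \subset S -> rk (x |: A) <= rk A -> rk (x |: S) <= rk S.
Proof.
move=> sAS hx; have := rk_submodS (X := x |: A) (Y := S) (U := x |: S) (I := A).
rewrite setUAC -setUA (setUidPl sAS) subxx subsetI subsetUr sAS.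
by move/(_ isT isT); lia.
Qed.

Lemma rk_span_setU S X :
    (forall x, x \in X -> exists2 A : {set T}, A \subset S & rk (x |: A) <= rk A) ->
  rk (S :|: X) <= rk S.
Proof.
elim/finset_ind: X => [|x X IH] spanX; first by rewrite setU0.
have [A sAS hA] := spanX x (setU11 x X).
apply: leq_trans (IH _); last by move=> y yX; apply: spanX; rewrite setU1r.
rewrite setUCA; apply: rk_span_setU1 hA.
exact: subset_trans sAS (subsetUl _ _).
Qed.

Lemma rk_span_setU_self S X : (forall x, x \in X -> rk (x |: S) <= rk S) ->
  rk (S :|: X) <= rk S.
Proof. by move=> spanX; apply: rk_span_setU => x /spanX; exists S. Qed.

Lemma rk_le_card_of_set1 : rk set0 = 0 -> (forall x, rk [set x] <= 1) ->
  forall X, rk X <= #|X|.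
Proof.
move=> rk0 rk1; elim/finset_ind => [|x X IH]; first by rewrite rk0.
case: (boolP (x \in X)) => xX; first by rewrite (setUidPr (_ : [set x] \subset X)) ?sub1set.
by apply: leq_trans (rk_subadd _ _) _; rewrite cardsU1 xX leq_add.
Qed.
End SubmodularFunctions.

Section MatroidFacts.
Variables (T : finType) (rk : {set T} -> nat).
Hypothesis hrk : is_matroid rk.
Implicit Types X Y : {set T}.

Lemma matroid_rk_card X : rk X <= #|X|. Proof. by case: hrk. Qed.

Lemma matroid_rk_mono X Y : X \subset Y -> rk X <= rk Y.
Proof. by case: hrk => _ + _; apply. Qed.

Lemma matroid_rk_submod X Y : rk (X :|: Y) + rk (X :&: Y) <= rk X + rk Y.
Proof. by case: hrk. Qed.

Lemma matroid_rk0 : rk set0 = 0.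
Proof. by have := matroid_rk_card set0; rewrite cards0; lia. Qed.

Lemma nonloop_rk1 e : ~~ is_loop rk e -> rk [set e] = 1.
Proof. by rewrite /is_loop => h; have := matroid_rk_card [set e]; rewrite cards1; lia. Qed.

Lemma parallel_sym e f : parallel rk e f = parallel rk f e.
Proof. by rewrite /parallel setUC eq_sym; do 2!case: is_loop. Qed.

Lemma parallel_trans e f g : parallel rk e f -> parallel rk f g -> e != g -> parallel rk e g.
Proof.
move=> /and4P [_ le lf /eqP ref] /and4P [_ _ lg /eqP rfg] neg.
apply/and4P; split => //; apply/eqP.
have : rk [set e; g] + rk [set f] <= rk [set e; f] + rk [set f; g].
  apply: (rk_submodS matroid_rk_mono matroid_rk_submod).
    by apply/subsetP => x; rewrite !inE => /orP [] ->; rewrite ?orbT.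
  by rewrite subsetI !sub1set !inE !eqxx orbT.
have : rk [set e] <= rk [set e; g] by apply: matroid_rk_mono; rewrite sub1set setU11.
by rewrite ref rfg !nonloop_rk1 //; lia.
Qed.

Definition parallel_class (t : T) : {set T} := [set f | (f == t) || parallel rk t f].

Lemma parallel_class_nonloop t f : ~~ is_loop rk t -> f \in parallel_class t ->
  ~~ is_loop rk f.
Proof. by move=> lt; rewrite inE => /orP [/eqP -> | /and4P []]. Qed.

Lemma parallel_class_rk t f : ~~ is_loop rk t -> f \in parallel_class t ->
  rk (f |: [set t]) <= rk [set t].
Proof.
move=> lt; rewrite inE => /orP [/eqP -> | /and4P [_ _ _ /eqP rtf]]; first by rewrite setUid.
by rewrite (nonloop_rk1 lt) setUC rtf.
Qed.

Section Simplification.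
Variable S : {set T}.
Hypothesis hS : simplification_set rk S.

Lemma simplification_nonloop t : t \in S -> ~~ is_loop rk t.
Proof. by case: hS => + _ _; apply. Qed.

Lemma parallel_class_uniq t t' f : t \in S -> t' \in S ->
  f \in parallel_class t -> f \in parallel_class t' -> t = t'.
Proof.
case: hS => _ nparS _ tS t'S; rewrite !inE.
case: (eqVneq t t') => // ntt' /orP [/eqP eft | ptf] /orP [/eqP eft' | pt'f].
- by move: ntt'; rewrite -eft -eft' eqxx.
- by move: (nparS _ _ t'S tS); rewrite -eft pt'f.
- by move: (nparS _ _ tS t'S); rewrite -eft' ptf.
- by move: (nparS _ _ tS t'S); rewrite (parallel_trans ptf _ ntt') // parallel_sym.
Qed.

Lemma parallel_class_cover f : ~~ is_loop rk f -> exists2 t, t \in S & f \in parallel_class t.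
Proof.
move=> lf; case: (boolP (f \in S)) => fS; first by exists f; rewrite // inE eqxx.
case: hS => _ _ /(_ f lf fS) [t tS pft].
by exists t; rewrite // inE parallel_sym pft orbT.
Qed.

Lemma simplification_indep_le2 X : X \subset S -> #|X| <= 2 -> rk X = #|X|.
Proof.
case: hS => nlS nparS _ sXS; rewrite leq_eqVlt ltnS leq_eqVlt ltnS leqn0 cards_eq0.
case/or3P => [/cards2P [e [f [nef eX]]] | /cards1P [e eX] | /eqP ->].
- move: sXS; rewrite eX subUset !sub1set => /andP [eS fS].
  have := nparS e f eS fS; rewrite /parallel nef !nlS //= cards2 nef.
  have := matroid_rk_card [set e; f]; rewrite cards2 nef.
  have : rk [set e] <= rk [set e; f] by apply: matroid_rk_mono; rewrite sub1set setU11.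
  by rewrite (nonloop_rk1 (nlS e eS)); lia.
- by move: sXS; rewrite eX sub1set cards1 => /nlS /nonloop_rk1.
- by rewrite cards0 matroid_rk0.
Qed.
End Simplification.

Definition canonical_simplification : {set T} :=
  [set e | ~~ is_loop rk e & [forall f, parallel rk e f ==> (enum_rank e < enum_rank f)]].

Lemma canonical_simplificationP : simplification_set rk canonical_simplification.
Proof.
split.
- by move=> e; rewrite inE => /andP [].
- move=> e f; rewrite !inE => /andP [_ /forallP ltef] /andP [_ /forallP ltfe].
  apply/negP => pef; have := implyP (ltef f) pef.
  by have := implyP (ltfe e); rewrite parallel_sym => /(_ pef); lia.
move=> e le eS; have ee : e \in parallel_class e by rewrite inE eqxx.
case: (@arg_minnP _ e (fun g => g \in parallel_class e) (fun g => val (enum_rank g)) ee)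
  => g /= ge gmin.
have pge : parallel rk g e \/ g = e.
  by move: ge; rewrite inE parallel_sym => /orP [/eqP | ]; [right | left].
have gS : g \in canonical_simplification.
  rewrite inE (parallel_class_nonloop le ge); apply/forallP => f; apply/implyP => pgf.
  have fe : f \in parallel_class e.
    rewrite inE; case: (eqVneq f e) => //= nfe.
    case: pge => [pge | eg]; last by rewrite -eg.
    by rewrite (parallel_trans _ pgf) 1?eq_sym // parallel_sym.
  have nfg : enum_rank g != enum_rank f.
    by apply: contraTneq pgf => /enum_rank_inj ->; rewrite /parallel eqxx.
  by move: (gmin f fe) nfg; rewrite -val_eqE /=; lia.
exists g => //; case: pge => [| eg]; first by rewrite parallel_sym.
by move: eS; rewrite -eg gS.
Qed.

Lemma minimal_dependent X : rk X < #|X| -> exists2 C : {set T}, C \subset X &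
  rk C < #|C| /\ forall x, x \in C -> rk (C :\ x) = #|C| - 1.
Proof.
move=> depX; have hX : (X \subset X) && (rk X < #|X|) by rewrite subxx depX.
case: (@arg_minnP _ X (fun C : {set T} => (C \subset X) && (rk C < #|C|))
  (fun C : {set T} => #|C|) hX) => C /andP [sCX depC] Cmin.
exists C => //; split => // x xC; have := cardsD1 x C; rewrite xC.
have := matroid_rk_card (C :\ x); have := matroid_rk_mono (subsetDl C [set x]).
have := Cmin (C :\ x); rewrite (subset_trans (subsetDl _ _) sCX) /=.
by case: ltnP => [_ /(_ isT) | ? _]; lia.
Qed.

(* The situation of three elements [x], [y], [w] of a circuit, with [Z] the
   rest of the circuit. *)
Definition circuit_triple (Z : {set T}) (x y w : T) :=
  rk ([set x; y] :|: Z) = #|Z| + 2 /\ rk (w |: ([set x; y] :|: Z)) <= rk ([set x; y] :|: Z).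

Lemma circuit_tripleC Z x y w : circuit_triple Z x y w -> circuit_triple Z y x w.
Proof. by rewrite /circuit_triple [[set y; x]]setUC. Qed.

Lemma circuit_triple_nonloop Z x y w : circuit_triple Z x y w -> ~~ is_loop rk x.
Proof.
move=> [indep _]; apply/negP; rewrite /is_loop => /eqP rkx.
have := rk_subadd matroid_rk_submod [set x] ([set y] :|: Z).
have := matroid_rk_card ([set y] :|: Z); have := (leq_card_setU [set y] Z).1.
by rewrite setUA indep rkx cards1; lia.
Qed.

Lemma circuit_triple_of_circuit C x y w :
  rk C < #|C| -> (forall v, v \in C -> rk (C :\ v) = #|C| - 1) ->
  x \in C -> y \in C -> w \in C -> [/\ x != y, y != w & w != x] ->
  circuit_triple (C :\: [set x; y; w]) x y w.
Proof.
move=> depC delC xC yC wC [nxy nyw nwx].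
have DE : [set x; y] :|: (C :\: [set x; y; w]) = C :\ w.
  apply/setP => v; rewrite !inE; case: (eqVneq v w) => [-> | nvw] /=.
    by rewrite orbT /= orbF (negbTE nwx) eq_sym (negbTE nyw).
  rewrite orbF; case: (eqVneq v x) => [-> | _]; first by rewrite xC.
  by case: (eqVneq v y) => [-> | _]; rewrite ?yC.
have cardD : #|C :\ w| = #|C :\: [set x; y; w]| + 2.
  rewrite -DE cardsU cards2 nxy.
  have -> : [set x; y] :&: (C :\: [set x; y; w]) = set0.
    by apply/setP => v; rewrite !inE; case: (v == x); case: (v == y).
  by rewrite cards0 subn0 addnC.
have cardC := cardsD1 w C; rewrite wC in cardC.
by rewrite /circuit_triple DE setD1K // delC //; split; lia.
Qed.
End MatroidFacts.

Definition paving_rk (T : finType) (Hs : seq {set T}) (r : nat) (X : {set T}) : nat :=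
  if has (fun H : {set T} => X \subset H) Hs then minn #|X| (r - 1) else minn #|X| r.

Section PavingMatroid.
Variables (T : finType) (Hs : seq {set T}) (r : nat).
Hypothesis hr : 2 <= r.
Hypothesis Hs_meet : forall H H' : {set T}, H \in Hs -> H' \in Hs -> H != H' ->
  #|H :&: H'| <= r - 2.
Implicit Types X Y : {set T}.
Local Notation rk := (paving_rk Hs r).

Lemma paving_rk_card X : rk X <= #|X|.
Proof. by rewrite /paving_rk; case: ifP => _; apply: geq_minl. Qed.

Lemma paving_rk_le X : rk X <= r.
Proof. by rewrite /paving_rk; case: ifP => _; rewrite geq_min ?leq_subr ?leqnn orbT. Qed.

Lemma paving_rk_mono X Y : X \subset Y -> rk X <= rk Y.
Proof.
move=> sXY; have := subset_leq_card sXY; rewrite /paving_rk.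
case: ifP => hX; case: ifP => /hasP hY; try lia.
case: hY => H HsH sYH; suff : has (fun H : {set T} => X \subset H) Hs by rewrite hX.
by apply/hasP; exists H => //; apply: subset_trans sYH.
Qed.

Lemma paving_rk_dependent X : rk X < r -> rk X < #|X| ->
  has (fun H : {set T} => X \subset H) Hs /\ rk X = r - 1.
Proof. by rewrite /paving_rk; case: ifP => hX; lia. Qed.

(* Two dependent non-spanning sets lie in hyperplanes; if these differ, the
   intersection is small enough to be independent. *)
Lemma paving_rk_submod_dependent X Y : rk X < r -> rk Y < r -> rk X < #|X| ->
  rk (X :|: Y) + rk (X :&: Y) <= rk X + rk Y.
Proof.
move=> hXr hYr /(paving_rk_dependent hXr) [/hasP [H HsH sXH] rkX].
have := paving_rk_le (X :|: Y); have := cardsUI X Y; have := paving_rk_card (X :&: Y).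
case: (ltnP (rk Y) #|Y|) => [hY | hY]; last first.
  have := paving_rk_card Y; have := subset_leq_card (subsetIr X Y).
  case: (boolP (Y \subset X)) => [sYX | nsYX]; last first.
    have : #|X :&: Y| < #|Y|.
      apply: proper_card; rewrite properEneq subsetIr andbT.
      by apply: contraNneq nsYX => <-; apply: subsetIl.
    lia.
  by rewrite (setUidPl sYX) (setIidPr sYX); lia.
have [/hasP [H' HsH' sYH'] rkY] := paving_rk_dependent hYr hY.
case: (eqVneq H H') => [eHH' | nHH'].
  have : rk (X :|: Y) <= r - 1.
    rewrite /paving_rk ifT; first lia.
    by apply/hasP; exists H => //; rewrite subUset sXH eHH' sYH'.
  have := paving_rk_mono (subsetIl X Y); lia.
have := Hs_meet HsH HsH' nHH'; have := subset_leq_card (setISS sXH sYH'); lia.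
Qed.

Lemma paving_rk_submod X Y : rk (X :|: Y) + rk (X :&: Y) <= rk X + rk Y.
Proof.
have rkU := paving_rk_le (X :|: Y).
have rkIX := paving_rk_mono (subsetIl X Y); have rkIY := paving_rk_mono (subsetIr X Y).
case: (ltnP (rk X) r) => hX; last lia.
case: (ltnP (rk Y) r) => hY; last lia.
case: (ltnP (rk X) #|X|) => hXd; first exact: paving_rk_submod_dependent.
case: (ltnP (rk Y) #|Y|) => hYd.
  by have := paving_rk_submod_dependent hY hX hYd; rewrite setUC setIC; lia.
have := paving_rk_card (X :|: Y); have := paving_rk_card (X :&: Y).
have := cardsUI X Y; have := paving_rk_card X; have := paving_rk_card Y; lia.
Qed.

Lemma paving_matroid : is_matroid rk.
Proof. by split; [apply: paving_rk_card | apply: paving_rk_mono | apply: paving_rk_submod]. Qed.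
End PavingMatroid.

Section Lindstrom.
Variable r : nat.
Hypothesis hr : 2 < r.
Local Notation E := (lindstrom_E r).
Local Notation rk := (@lindstrom_rk r).

Definition parts (s : seq nat) : {set E} := [set x : E | val x.1 \in s].

Lemma parts_cat s t : parts s :|: parts t = parts (s ++ t).
Proof. by apply/setP => x; rewrite !inE mem_cat. Qed.

Lemma parts_cap s t : parts s :&: parts t = parts [seq i <- s | i \in t].
Proof. by apply/setP => x; rewrite !inE mem_filter andbC. Qed.

Lemma parts_cons i s : parts (i :: s) = parts [:: i] :|: parts s.
Proof. by rewrite parts_cat. Qed.

Lemma parts_nil : parts [::] = set0.
Proof. by apply/setP => x; rewrite !inE. Qed.

Lemma parts1 i (i4 : i < 4) : parts [:: i] = setX [set Ordinal i4] [set: 'I_(r - 2)].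
Proof. by apply/setP => x; rewrite !inE andbT -val_eqE. Qed.

Lemma card_parts1 i : #|parts [:: i]| = (i < 4) * (r - 2).
Proof.
case: (ltnP i 4) => i4; first by rewrite (parts1 i4) cardsX cards1 cardsT card_ord.
apply/eqP; rewrite mul0n cards_eq0; apply/eqP/setP => x; rewrite !inE.
by apply/negbTE; apply: contraTneq i4 => <-; rewrite -ltnNge ltn_ord.
Qed.

Lemma card_parts_le s : #|parts s| <= size s * (r - 2).
Proof.
elim: s => [|i s IH]; first by rewrite parts_nil cards0.
rewrite parts_cons mulSn; apply: leq_trans (leq_card_setU _ _) _.
by apply: leq_add => //; rewrite card_parts1; case: (i < 4); lia.
Qed.

Lemma card_parts s : uniq s -> all (fun i => i < 4) s -> #|parts s| = size s * (r - 2).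
Proof.
elim: s => [|i s IH] /=; first by rewrite parts_nil cards0.
move=> /andP [nis us] /andP [i4 s4].
have disj : parts [:: i] :&: parts s = set0.
  by apply/setP => x; rewrite !inE; apply: contraNF nis => /andP [/eqP <- ?].
by rewrite parts_cons cardsU disj cards0 subn0 IH // card_parts1 i4 mulSn mul1n.
Qed.

Lemma parts_subset s t : all (fun i => i < 4) s -> (parts s \subset parts t) = all (mem t) s.
Proof.
have r2 : 0 < r - 2 by lia.
move=> s4; apply/subsetP/allP => [sst i si | st x]; last by rewrite !inE => /st.
by have := sst (Ordinal (allP s4 i si), Ordinal r2); rewrite !inE /=; apply.
Qed.

Definition lindstrom_hyp_indices : seq (nat * nat) :=
  [:: (0, 1); (0, 2); (0, 3); (1, 2); (1, 3)].

Definition lindstrom_hyperplanes : seq {set E} :=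
  [seq parts [:: q.1; q.2] | q <- lindstrom_hyp_indices].

Lemma lindstrom_rk_paving X : rk X = paving_rk lindstrom_hyperplanes r X.
Proof.
have partE p : lindstrom_part r p = parts [:: val p.1; val p.2].
  by apply/setP => x; rewrite !inE -!val_eqE.
rewrite /lindstrom_hyperplanes.
have -> : lindstrom_hyp_indices = [seq (val p.1, val p.2) | p <- lindstrom_hyps].
  by rewrite /lindstrom_hyps /= !inordK.
rewrite /lindstrom_rk /paving_rk -map_comp has_map.
by congr (if _ then _ else _); apply: eq_has => p; rewrite /= partE.
Qed.

Lemma lindstrom_hyperplanes_meet H H' : H \in lindstrom_hyperplanes ->
  H' \in lindstrom_hyperplanes -> H != H' -> #|H :&: H'| <= r - 2.
Proof.
move=> /mapP [q hq ->] /mapP [q' hq' ->] nHH'.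
have nqq' : q != q' by apply: contraNneq nHH' => ->.
rewrite parts_cap; apply: leq_trans (card_parts_le _) _.
rewrite -[leqRHS]mul1n leq_mul2r; apply/orP; right.
have meet1 : all (fun q => all (fun q' =>
    (q == q') || (size [seq i <- [:: q.1; q.2] | i \in [:: q'.1; q'.2]] <= 1))
    lindstrom_hyp_indices) lindstrom_hyp_indices by [].
by have := allP (allP meet1 q hq) q' hq'; rewrite (negbTE nqq').
Qed.

Lemma lindstrom_matroid : is_matroid rk.
Proof.
have [rk_card rk_mono rk_sub] := paving_matroid (ltnW hr) lindstrom_hyperplanes_meet.
by split => [X | X Y sXY | X Y]; rewrite !lindstrom_rk_paving; auto.
Qed.

Lemma lindstrom_loopless e : ~~ is_loop rk e.
Proof. by rewrite /is_loop lindstrom_rk_paving /paving_rk cards1; case: ifP; lia. Qed.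

Lemma lindstrom_rk_parts s : uniq s -> all (fun i => i < 4) s ->
  rk (parts s) =
    if has (fun q : nat * nat => all (mem [:: q.1; q.2]) s) lindstrom_hyp_indices
    then minn (size s * (r - 2)) (r - 1) else minn (size s * (r - 2)) r.
Proof.
move=> us s4; rewrite lindstrom_rk_paving /paving_rk card_parts // has_map.
by congr (if _ then _ else _); apply: eq_has => q; rewrite /= parts_subset.
Qed.

Lemma parts_all : parts [:: 0; 1; 2; 3] = [set: E].
Proof. by apply/setP => -[[[|[|[|[|n]]]] hn] y]; rewrite !inE. Qed.
End Lindstrom.

Section LindstromRanks.
Variable r : nat.
Hypothesis hr : 4 <= r.
Local Notation rk := (@lindstrom_rk r).
Local Notation A := (parts r [:: 0]).
Local Notation B := (parts r [:: 1]).
Local Notation C := (parts r [:: 2]).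
Local Notation D := (parts r [:: 3]).

Lemma lindstrom_rkT : rk setT = r.
Proof. by rewrite -parts_all lindstrom_rk_parts //=; lia. Qed.

Lemma lindstrom_rk_CD : rk (C :|: D) = rk setT.
Proof. by rewrite lindstrom_rkT parts_cat lindstrom_rk_parts //=; lia. Qed.

Lemma lindstrom_rank_inequality :
  rk (A :|: B) + rk (A :|: C) + rk (B :|: C) + rk (A :|: D) + rk (B :|: D) <
  rk setT + rk A + rk B + rk (A :|: B :|: C) + rk (A :|: B :|: D).
Proof. by rewrite lindstrom_rkT !parts_cat !lindstrom_rk_parts //=; lia. Qed.
End LindstromRanks.

Ltac finset_bool :=
  apply/subsetP => -[? ?]; rewrite !inE /=;
  repeat match goal with |- context [?x \in ?A] => case: (x \in A) end;
  repeat match goal with |- context [?x == ?y] => case: (x == y) end.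

Lemma imset_pairl (T1 T2 : finType) (e : T1) (S : {set T2}) :
  [set (e, x) | x in S] = setX [set e] S.
Proof.
apply/setP => -[e0 f0]; rewrite in_setX in_set1.
by apply/imsetP/andP => [[x xS [-> ->]] | [/eqP -> f0S]]; [rewrite eqxx | exists f0].
Qed.

Lemma imset_pairr (T1 T2 : finType) (f : T2) (Y : {set T1}) :
  [set (x, f) | x in Y] = setX Y [set f].
Proof.
apply/setP => -[e0 f0]; rewrite in_setX in_set1.
by apply/imsetP/andP => [[x xY [-> ->]] | [e0Y /eqP ->]]; [rewrite eqxx | exists e0].
Qed.

Lemma setXUr (T1 T2 : finType) (A : {set T1}) (B B' : {set T2}) :
  setX A (B :|: B') = setX A B :|: setX A B'.
Proof. by apply/setP => -[e f]; rewrite !inE andb_orr. Qed.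

Lemma setXUl (T1 T2 : finType) (A A' : {set T1}) (B : {set T2}) :
  setX (A :|: A') B = setX A B :|: setX A' B.
Proof. by apply/setP => -[e f]; rewrite !inE andb_orl. Qed.

Lemma setX11 (T1 T2 : finType) (e : T1) (f : T2) : setX [set e] [set f] = [set (e, f)].
Proof. by apply/setP => -[e0 f0]; rewrite !inE xpair_eqE. Qed.

(* Sets over [EM * EN] can carry HB's [reverse_coercion] in an implicit
   argument, so [lia] would see two copies of one atom. *)
Ltac set_lia := unfold reverse_coercion in *; lia.

Section Tensor.
Variables (EM EN : finType) (rkM : {set EM} -> nat) (rkN : {set EN} -> nat)
  (rkP : {set EM * EN} -> nat).
Hypothesis hN : is_matroid rkN.
Hypothesis hP : tensor_product rkM rkN rkP.
Hypothesis M_loopless : forall e, ~~ is_loop rkM e.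
Implicit Types (S Z : {set EN}) (Y W V : {set EM}) (U : {set EM * EN}) (e : EM).
Local Notation R := (rkM setT).

Lemma tensor_matroid : is_matroid rkP. Proof. by case: hP => -[]. Qed.
Let rkP_mono := matroid_rk_mono tensor_matroid.
Let rkP_submod := matroid_rk_submod tensor_matroid.

Lemma tensor_rk_row e S : rkP (setX [set e] S) = rkN S.
Proof. by case: hP => -[_ hrow _ _ _] _; rewrite -imset_pairl hrow. Qed.

Lemma tensor_rk_col f Y : ~~ is_loop rkN f -> rkP (setX Y [set f]) = rkM Y.
Proof. by case: hP => -[_ _ hcol _ _] _ lf; rewrite -imset_pairr hcol. Qed.

Lemma tensor_rk_col_le f : rkP (setX [set: EM] [set f]) <= R.
Proof.
case: (boolP (is_loop rkN f)) => lf; last by rewrite tensor_rk_col.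
case: hP => -[_ _ _ _ hloop] _; rewrite -imset_pairr.
have -> : [set (x, f) | x in setT] = [set (x, f) | x : EM].
  by apply/setP => p; apply/imsetP/imsetP => -[x _ ->]; exists x.
by rewrite hloop.
Qed.

(* A new column either raises the rank of N, and costs at most [R], or lies in
   the closure of the old columns row by row. *)
Lemma tensor_rk_cols_setU1 S x :
  rkP (setX [set: EM] (x |: S)) + R * rkN S <= rkP (setX [set: EM] S) + R * rkN (x |: S).
Proof.
have colsE : setX [set: EM] (x |: S) = setX [set: EM] S :|: setX [set: EM] [set x].
  by rewrite setXUr setUC.
have := matroid_rk_mono hN (subsetUr [set x] S).
case: (leqP (rkN (x |: S)) (rkN S)) => hx hmono.
  have -> : rkN (x |: S) = rkN S by lia.
  suff : rkP (setX [set: EM] (x |: S)) <= rkP (setX [set: EM] S) by lia.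
  rewrite colsE; apply: rk_span_setU => // -[e f]; rewrite !inE /= => /eqP ->.
  exists (setX [set e] S); first by apply: setXS; rewrite ?subsetT.
  by rewrite -setX11 -setXUr !tensor_rk_row.
have := rk_subadd rkP_submod (setX [set: EM] S) (setX [set: EM] [set x]).
rewrite -colsE; have := tensor_rk_col_le x; nia.
Qed.

Lemma tensor_rk_cols_setU S S' :
  rkP (setX [set: EM] (S :|: S')) + R * rkN S <= rkP (setX [set: EM] S) + R * rkN (S :|: S').
Proof.
elim/finset_ind: S' => [|x S' IH]; first by rewrite setU0.
by rewrite setUCA; have := tensor_rk_cols_setU1 (S :|: S') x; lia.
Qed.

Lemma tensor_rk_cols_ge S : R * rkN S <= rkP (setX [set: EM] S).
Proof.
have := tensor_rk_cols_setU S setT; rewrite setUT.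
have -> : setX [set: EM] [set: EN] = setT by apply/setP => -[e f]; rewrite in_setX !in_setT.
by case: hP => _ ->; lia.
Qed.

Lemma tensor_rk_cols_le S : rkP (setX [set: EM] S) <= R * #|S|.
Proof.
elim/finset_ind: S => [|x S IH].
  have -> : setX [set: EM] (@set0 EN) = set0 by apply/setP => -[e f]; rewrite in_setX !inE andbF.
  by rewrite (matroid_rk0 tensor_matroid).
case: (boolP (x \in S)) => xS; first by rewrite (setUidPr (_ : [set x] \subset S)) ?sub1set.
rewrite setXUr cardsU1 xS mulnDr muln1; apply: leq_trans (rk_subadd rkP_submod _ _) _.
by rewrite leq_add ?tensor_rk_col_le.
Qed.

Lemma tensor_rkM_le f Y : ~~ is_loop rkN f -> rkM Y <= R.
Proof.
by move=> lf; rewrite -!(tensor_rk_col _ lf); apply/rkP_mono/setXS; rewrite ?subsetT.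
Qed.

Section Contraction.
Variable Z : {set EN}.
Implicit Types (x y w : EN).
Local Notation col Y f := (setX Y [set f]).
Local Notation Q := (rk_contract rkP (setX [set: EM] Z)).
Local Notation z := (rkP (setX [set: EM] Z)).
Let Q_mono := rk_contract_mono rkP_mono (setX [set: EM] Z).
Let Q_submod := rk_contract_submod rkP_mono rkP_submod (setX [set: EM] Z).

Lemma contract_two_cols_le x y Y W : ~~ is_loop rkN x -> ~~ is_loop rkN y ->
  Q (col Y x :|: col W y) <= rkM Y + rkM W + z.
Proof.
move=> lx ly; have := rk_subadd rkP_submod (col Y x :|: col W y) (setX [set: EM] Z).
have := rk_subadd rkP_submod (col Y x) (col W y).
by rewrite /rk_contract !tensor_rk_col //; set_lia.
Qed.

Lemma contract_col_le x Y : ~~ is_loop rkN x -> Q (col Y x) <= rkM Y + z.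
Proof.
move=> lx; have := rk_subadd rkP_submod (col Y x) (setX [set: EM] Z).
by rewrite /rk_contract tensor_rk_col //; set_lia.
Qed.

Lemma tensor_col_swap f Y (S U : {set EM * EN}) : ~~ is_loop rkN f ->
  U \subset S :|: col [set: EM] f -> col Y f \subset S -> rkP U + rkM Y <= rkP S + R.
Proof.
move=> lf sU sYS; rewrite -(tensor_rk_col Y lf) -(tensor_rk_col setT lf).
by apply: (rk_submodS rkP_mono rkP_submod) => //; rewrite subsetI sYS setXS ?subsetT.
Qed.

(* Columns [x], [y] and [Z] have rank [R * (#|Z| + 2)], shrinking column [x]
   to [Y] loses at most [R - rkM Y], and [Z] alone has rank at most [R * #|Z|]. *)
Lemma contract_two_cols_ge x y w Y W : circuit_triple rkN Z x y w ->
  rkM Y + rkM W + z <= Q (col Y x :|: col W y).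
Proof.
move=> ct; have [indep _] := ct.
have lx := circuit_triple_nonloop hN ct.
have ly := circuit_triple_nonloop hN (circuit_tripleC ct).
have := tensor_rk_cols_ge ([set x; y] :|: Z); rewrite indep !setXUr.
have := tensor_rk_cols_le Z.
have : rkP (col [set: EM] x :|: col [set: EM] y :|: setX [set: EM] Z) + rkM Y <=
       rkP (col Y x :|: col [set: EM] y :|: setX [set: EM] Z) + R.
  by apply: tensor_col_swap lx _ _; finset_bool.
have : rkP (col Y x :|: col [set: EM] y :|: setX [set: EM] Z) + rkM W <=
       rkP (col Y x :|: col W y :|: setX [set: EM] Z) + R.
  by apply: tensor_col_swap ly _ _; finset_bool.
by rewrite /rk_contract mulnDr; set_lia.
Qed.

(* Row [e] is a copy of N, in which [w] is spanned by [x], [y] and [Z]. *)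
Lemma contract_row_span x y w e (S : {set EM * EN}) : circuit_triple rkN Z x y w ->
  (e, x) \in S -> (e, y) \in S -> Q ((e, w) |: S) <= Q S.
Proof.
move=> [_ span] xS yS; rewrite /rk_contract -setUA.
apply: (rk_span_setU1 rkP_mono rkP_submod (A := setX [set e] ([set x; y] :|: Z))).
  apply/subsetP => -[e0 f]; rewrite !inE /= => /andP [/eqP -> /orP [/orP [] /eqP -> | fZ]].
  - by rewrite xS.
  - by rewrite yS.
  - by rewrite fZ orbT.
by rewrite -setX11 -setXUr !tensor_rk_row.
Qed.

Lemma contract_fill_le x y w a b u :
  circuit_triple rkN Z x y w -> circuit_triple rkN Z x w y ->
  Q (col a x :|: col b y :|: col (a :|: u) w) <= rkM (a :|: u) + rkM (a :|: b) + z.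
Proof.
move=> ctw cty.
have lx := circuit_triple_nonloop hN ctw.
have lw := circuit_triple_nonloop hN (circuit_tripleC cty).
have ly := circuit_triple_nonloop hN (circuit_tripleC ctw).
have h1 : Q (col a x :|: col (a :|: u) w :|: col a y) <= rkM a + rkM (a :|: u) + z.
  apply: leq_trans (contract_two_cols_le _ _ lx lw).
  apply: (rk_span_setU_self Q_mono Q_submod) => -[e f]; rewrite !inE /= => /andP [ea /eqP ->].
  by apply: (contract_row_span cty); rewrite !inE /= ea !eqxx ?orbT.
have h2 := contract_two_cols_le a (a :|: b) lx ly.
have h3 := contract_two_cols_ge a a ctw.
have : Q (col a x :|: col b y :|: col (a :|: u) w) + Q (col a x :|: col a y) <=
       Q (col a x :|: col (a :|: u) w :|: col a y) + Q (col a x :|: col (a :|: b) y).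
  by apply: (rk_submodS Q_mono Q_submod); finset_bool.
set_lia.
Qed.

Lemma contract_fill_ge x y w a b V :
  circuit_triple rkN Z x w y -> circuit_triple rkN Z y w x -> a :|: b \subset V ->
  rkM (a :|: b) + rkM V + z <= Q (col a x :|: col b y :|: col V w).
Proof.
move=> cty ctx /subsetP sabV.
set S := col a x :|: col b y :|: col V w.
have fill : Q (S :|: (col a y :|: col b x)) <= Q S.
  apply: (rk_span_setU_self Q_mono Q_submod) => -[e f].
  rewrite !inE /= => /orP [] /andP [eab /eqP ->].
  - by apply: (contract_row_span cty); rewrite !inE /= eab sabV ?inE ?eab ?eqxx ?orbT.
  - by apply: (contract_row_span ctx); rewrite !inE /= eab sabV ?inE ?eab ?eqxx ?orbT.
apply: leq_trans fill; apply: leq_trans (contract_two_cols_ge (a :|: b) V cty) _.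
by apply: Q_mono; finset_bool.
Qed.

Lemma contract_col_full w y x V (S : {set EM * EN}) :
  circuit_triple rkN Z w y x -> rkM V = R ->
  Q (S :|: col [set: EM] w) <= Q (S :|: col V w).
Proof.
move=> ct rkV; have lw := circuit_triple_nonloop hN ct.
apply: leq_trans (Q_mono (_ : _ \subset S :|: col V w :|: col [set: EM] w)) _.
  by finset_bool.
apply: (rk_span_setU Q_mono Q_submod) => -[e f]; rewrite !inE /= => /eqP ->.
exists (col V w); first exact: subsetUr.
have : Q (col V w :|: col set0 y) <= Q (col V w) by apply: Q_mono; finset_bool.
have := contract_two_cols_ge V set0 ct.
have : Q ((e, w) |: col V w) <= rkM (e |: V) + z.
  by rewrite -setX11 -setXUl; apply: contract_col_le.
by have := tensor_rkM_le (e |: V) lw; set_lia.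
Qed.

Lemma tensor_circuit_rank_inequality c1 c2 c3 a b c d :
  circuit_triple rkN Z c1 c2 c3 -> circuit_triple rkN Z c1 c3 c2 ->
  circuit_triple rkN Z c2 c3 c1 -> rkM (c :|: d) = R ->
  R + rkM a + rkM b + rkM (a :|: b :|: c) + rkM (a :|: b :|: d) <=
  rkM (a :|: b) + rkM (a :|: c) + rkM (b :|: c) + rkM (a :|: d) + rkM (b :|: d).
Proof.
move=> ct3 ct2 ct1 rkcd.
pose K := col a c1 :|: col b c2.
pose G Y := Q (K :|: col Y c3).
have Ga u : G (a :|: u) <= rkM (a :|: u) + rkM (a :|: b) + z.
  exact: contract_fill_le ct3 ct2.
have Gb u : G (b :|: u) <= rkM (b :|: u) + rkM (a :|: b) + z.
  rewrite /G /K [col a c1 :|: _]setUC [a :|: b]setUC.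
  exact: contract_fill_le (circuit_tripleC ct3) ct1.
have Gab u : rkM (a :|: b) + rkM (a :|: b :|: u) + z <= G (a :|: b :|: u).
  exact: contract_fill_ge ct2 ct1 (subsetUl _ _).
have Gcd : rkM (a :|: b) + R + z <= G (c :|: d).
  apply: leq_trans (contract_col_full K (circuit_tripleC ct2) rkcd).
  exact: contract_fill_ge ct2 ct1 (subsetT _).
have QK : rkM a + rkM b + z <= Q K := contract_two_cols_ge a b ct3.
have Gsub u : G (a :|: b :|: u) + G u <= G (a :|: u) + G (b :|: u).
  by apply: (rk_submodS Q_mono Q_submod); finset_bool.
have Gsubcd : G (c :|: d) + Q K <= G c + G d.
  by apply: (rk_submodS Q_mono Q_submod); finset_bool.
by have := Gsub c; have := Gsub d; have := Ga c; have := Ga d; have := Gb c;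
  have := Gb d; have := Gab c; have := Gab d; set_lia.
Qed.
End Contraction.

Lemma tensor_simplification_free {a b c d : {set EM}} :
  rkM (c :|: d) = rkM setT ->
  rkM (a :|: b) + rkM (a :|: c) + rkM (b :|: c) + rkM (a :|: d) + rkM (b :|: d) <
  rkM setT + rkM a + rkM b + rkM (a :|: b :|: c) + rkM (a :|: b :|: d) ->
  simplification_free rkN.
Proof.
move=> rkcd ineq.
exists (canonical_simplification rkN); split; first exact: canonical_simplificationP.
move=> X sXT; apply/eqP; rewrite eqn_leq matroid_rk_card //= leqNgt; apply/negP => depX.
have [C sCX [depC delC]] := minimal_dependent hN depX.
have /card_gt2P [x [y [w [[xC yC wC] [nxy nyw nwx]]]]] : 2 < #|C|.
  rewrite ltnNge; apply: contraTN depC => smallC.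
  rewrite (simplification_indep_le2 hN (canonical_simplificationP hN)) ?ltnn //.
  exact: subset_trans sCX sXT.
set Z := C :\: [set x; y; w].
have ctw : circuit_triple rkN Z x y w.
  exact: circuit_triple_of_circuit.
have cty : circuit_triple rkN Z x w y.
  rewrite /Z setUAC; apply: circuit_triple_of_circuit => //.
  by split; rewrite eq_sym.
have ctx : circuit_triple rkN Z y w x.
  have -> : Z = C :\: [set y; w; x].
    congr (_ :\: _); apply/setP => v; rewrite !inE.
    by case: (v == x); case: (v == y); case: (v == w).
  exact: circuit_triple_of_circuit.
by have := tensor_circuit_rank_inequality a b ctw cty ctx rkcd; lia.
Qed.
End Tensor.

Section FreeTensor.
Variables (EM EN : finType) (rkM : {set EM} -> nat) (rkN : {set EN} -> nat).
Hypothesis hM : is_matroid rkM.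
Hypothesis hN : is_matroid rkN.
Hypothesis M_loopless : forall e, ~~ is_loop rkM e.
Variable T : {set EN}.
Hypothesis hT : simplification_set rkN T.
Hypothesis T_free : forall X : {set EN}, X \subset T -> rkN X = #|X|.
Implicit Types (X : {set EN}) (U V : {set EM * EN}) (e : EM) (f t : EN).
Local Notation class := (parallel_class rkN).

Definition class_proj t U : {set EM} :=
  [set e | [exists f, (f \in class t) && ((e, f) \in U)]].

(* Up to loops and parallel copies [N] is the free matroid on [T], so the
   tensor product is a direct sum of copies of [M], one per element of [T]. *)
Definition free_tensor_rk U : nat := \sum_(t in T) rkM (class_proj t U).

Lemma class_proj_mono t U V : U \subset V -> class_proj t U \subset class_proj t V.
Proof.
move=> /subsetP sUV; apply/subsetP => e; rewrite !inE => /existsP [f /andP [ft eU]].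
by apply/existsP; exists f; rewrite ft sUV.
Qed.

Lemma class_projU t U V : class_proj t (U :|: V) = class_proj t U :|: class_proj t V.
Proof.
apply/setP => e; rewrite !inE; apply/existsP/orP => [[f] | [] /existsP [f /andP [ft h]]].
  by rewrite in_setU => /andP [ft /orP [] h]; [left | right];
    apply/existsP; exists f; rewrite ft.
all: by exists f; rewrite ft inE h ?orbT.
Qed.

Lemma class_proj_set1 t e f :
  class_proj t [set (e, f)] = if f \in class t then [set e] else set0.
Proof.
apply/setP => e0; rewrite inE; case: ifP => ft; rewrite inE.
  apply/existsP/eqP => [[f0 /andP [_]] | ->]; first by rewrite inE xpair_eqE => /andP [/eqP].
  by exists f; rewrite ft inE eqxx.
apply/existsP => -[f0 /andP [f0t]]; rewrite inE xpair_eqE => /andP [_ /eqP ef0].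
by move: f0t; rewrite ef0 ft.
Qed.

Lemma free_tensor_rk_mono U V : U \subset V -> free_tensor_rk U <= free_tensor_rk V.
Proof. by move=> sUV; apply: leq_sum => t _; apply/(matroid_rk_mono hM)/class_proj_mono. Qed.

Lemma free_tensor_rk_submod U V :
  free_tensor_rk (U :|: V) + free_tensor_rk (U :&: V) <= free_tensor_rk U + free_tensor_rk V.
Proof.
rewrite -!big_split /=; apply: leq_sum => t _; rewrite class_projU.
apply: leq_trans (matroid_rk_submod hM _ _); rewrite leq_add2l.
by apply: (matroid_rk_mono hM); rewrite subsetI !class_proj_mono ?subsetIl ?subsetIr.
Qed.

Lemma free_tensor_rk_set1 p : free_tensor_rk [set p] <= 1.
Proof.
case: p => e f; rewrite /free_tensor_rk.
case: (boolP [exists t in T, f \in class t]) => [/existsP [t /andP [tT ft]] | nf].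
  rewrite (bigD1 t) //= class_proj_set1 ft (nonloop_rk1 hM) // big1 // => t' /andP [t'T nt't].
  rewrite class_proj_set1; case: ifP => ft'; last exact: matroid_rk0.
  by move: nt't; rewrite (parallel_class_uniq hN hT t'T tT ft' ft) eqxx.
rewrite big1 // => t tT; rewrite class_proj_set1; case: ifP => ft; last exact: matroid_rk0.
by move: nf; rewrite negb_exists => /forallP /(_ t); rewrite tT ft.
Qed.

Lemma free_tensor_matroid : is_matroid free_tensor_rk.
Proof.
have rk0 : free_tensor_rk set0 = 0.
  by apply: big1 => t _; rewrite (_ : class_proj t set0 = set0) ?matroid_rk0 //;
    apply/setP => e; rewrite !inE; apply/existsP => -[f]; rewrite !inE andbF.
split; [| exact: free_tensor_rk_mono | exact: free_tensor_rk_submod].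
exact: (rk_le_card_of_set1 free_tensor_rk_submod rk0 free_tensor_rk_set1).
Qed.

Definition class_support X : {set EN} :=
  [set t in T | [exists f, (f \in class t) && (f \in X)]].

(* [X] and its class support span each other, and the support is independent. *)
Lemma rk_class_support X : rkN X = #|class_support X|.
Proof.
have rk_mono := matroid_rk_mono hN; have rk_submod := matroid_rk_submod hN.
have sST : class_support X \subset T by apply/subsetP => t; rewrite inE => /andP [].
rewrite -(T_free sST).
have h1 : rkN (X :|: class_support X) <= rkN X.
  apply: (rk_span_setU rk_mono rk_submod) => t.
  rewrite inE => /andP [tT /existsP [f /andP [ft fX]]].
  exists [set f]; first by rewrite sub1set.
  have lt := simplification_nonloop hT tT; have lf := parallel_class_nonloop lt ft.
  by rewrite setUC (nonloop_rk1 hN lf) -(nonloop_rk1 hN lt) parallel_class_rk.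
have h2 : rkN (class_support X :|: X) <= rkN (class_support X).
  apply: (rk_span_setU rk_mono rk_submod) => x xX.
  case: (boolP (is_loop rkN x)) => lx.
    by exists set0; rewrite ?sub0set // setU0; move: lx => /eqP ->.
  have [t tT xt] := parallel_class_cover hT lx.
  exists [set t]; last exact: parallel_class_rk (simplification_nonloop hT tT) xt.
  by rewrite sub1set inE tT; apply/existsP; exists x; rewrite xt xX.
have := rk_mono _ _ (subsetUl X (class_support X)).
by have := rk_mono _ _ (subsetUr X (class_support X)); rewrite setUC in h2; lia.
Qed.

Lemma class_proj_row t e X : class_proj t (setX [set e] X) =
  if [exists f, (f \in class t) && (f \in X)] then [set e] else set0.
Proof.
apply/setP => e0; rewrite inE; case: ifP => hX; rewrite inE.
  apply/existsP/eqP => [[f /andP [_]] | ->]; first by rewrite in_setX inE => /andP [/eqP].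
  by case/existsP: hX => f /andP [ft fX]; exists f; rewrite ft in_setX inE eqxx.
apply/existsP => -[f /andP [ft]]; rewrite in_setX => /andP [_ fX].
by move/negbT: hX; rewrite negb_exists => /forallP /(_ f); rewrite ft fX.
Qed.

Lemma free_tensor_rk_row e X : free_tensor_rk [set (e, x) | x in X] = rkN X.
Proof.
rewrite imset_pairl rk_class_support /free_tensor_rk.
rewrite (eq_bigr (fun t => [exists f, (f \in class t) && (f \in X)] : nat)); last first.
  move=> t _; rewrite class_proj_row; case: ifP => _; last exact: matroid_rk0.
  exact: nonloop_rk1.
rewrite -sum1_card [RHS](eq_bigl (fun t => (t \in T) && [exists f, (f \in class t) && (f \in X)]));
  last by move=> t; rewrite inE.
by rewrite [RHS]big_mkcondr; apply: eq_bigr => t _; case: [exists f, _].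
Qed.

Lemma class_proj_col t Y f :
  class_proj t (setX Y [set f]) = if f \in class t then Y else set0.
Proof.
apply/setP => e; rewrite inE; case: ifP => ft.
  apply/existsP/idP => [[f0 /andP [_]] | eY]; first by rewrite in_setX => /andP [].
  by exists f; rewrite ft in_setX eY inE eqxx.
rewrite inE; apply/existsP => -[f0 /andP [f0t]]; rewrite in_setX inE => /andP [_ /eqP ef0].
by move: f0t; rewrite ef0 ft.
Qed.

Lemma free_tensor_rk_col f (Y : {set EM}) :
  ~~ is_loop rkN f -> free_tensor_rk [set (x, f) | x in Y] = rkM Y.
Proof.
move=> lf; have [t tT ft] := parallel_class_cover hT lf.
rewrite imset_pairr /free_tensor_rk (bigD1 t) //= class_proj_col ft big1 ?addn0 //.
move=> t' /andP [t'T nt't].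
rewrite class_proj_col; case: ifP => ft'; last exact: matroid_rk0.
by move: nt't; rewrite (parallel_class_uniq hN hT t'T tT ft' ft) eqxx.
Qed.

Lemma free_tensor_rk_col_loop f : is_loop rkN f -> free_tensor_rk [set (x, f) | x : EM] = 0.
Proof.
move=> lf; rewrite /free_tensor_rk big1 // => t tT.
have -> : [set (x, f) | x : EM] = setX setT [set f].
  by rewrite -imset_pairr; apply/setP => p; apply/imsetP/imsetP => -[x _ ->]; exists x.
rewrite class_proj_col; case: ifP => ft; last exact: matroid_rk0.
by move: (parallel_class_nonloop (simplification_nonloop hT tT) ft); rewrite lf.
Qed.

Lemma free_tensor_rk_setT : free_tensor_rk setT = rkM setT * rkN setT.
Proof.
rewrite /free_tensor_rk (eq_bigr (fun => rkM setT)); last first.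
  move=> t tT; congr rkM; apply/setP => e; rewrite !inE; apply/existsP; exists t.
  by rewrite !inE eqxx.
have suppT : class_support setT = T.
  by apply/setP => t; rewrite !inE andb_idr // => _; apply/existsP; exists t; rewrite !inE eqxx.
by rewrite sum_nat_const rk_class_support suppT mulnC.
Qed.

Lemma free_tensor_product : tensor_product rkM rkN free_tensor_rk.
Proof.
split; last exact: free_tensor_rk_setT.
split; [exact: free_tensor_matroid | by move=> e _; apply: free_tensor_rk_row
  | by move=> f lf Y; apply: free_tensor_rk_col | by move=> e; rewrite (negbTE (M_loopless e))
  | exact: free_tensor_rk_col_loop].
Qed.
End FreeTensor.

Theorem corollary2p10 (r : nat) (hr : 4 <= r) (EN : finType)
  (rkN : {set EN} -> nat) (hN : is_matroid rkN) :
  has_tensor_product (@lindstrom_rk r) rkN <-> simplification_free rkN.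
Proof.
have hr2 : 2 < r by lia.
split => [[rkP hP] | [T [hT T_free]]].
  exact (tensor_simplification_free hN hP (lindstrom_loopless hr2)
    (lindstrom_rk_CD hr) (lindstrom_rank_inequality hr)).
exists (free_tensor_rk (@lindstrom_rk r) rkN T).
exact (free_tensor_product (lindstrom_matroid hr2) hN (lindstrom_loopless hr2) hT T_free).
Qed.
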